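(* Let $\eta,\varepsilon,\alpha_1,\alpha_2\in\mathbb R$. Let $\phi_h,u_h,v_h,w_h$ be continuously differentiable in $t$ with values in $V_h$ and satisfy, for every $j$ and all $\varphi_1,\dots,\varphi_4\in V_h$, $$\tfrac12\int_{I_j}\partial_tu_h\varphi_1dx-\int_{I_j}w_h\partial_x\varphi_1dx+(\widehat{w_h}\varphi_1^-)_{j+\frac12}-(\widehat{w_h}\varphi_1^+)_{j-\frac12}=0,$$ $$-\tfrac12\int_{I_j}\partial_t\phi_h\varphi_2dx+\varepsilon\Big(\int_{I_j}v_h\partial_x\varphi_2dx-(\widehat{v_h}\varphi_2^-)_{j+\frac12}+(\widehat{v_h}\varphi_2^+)_{j-\frac12}\Big)=\int_{I_j}\big(-w_h+\tfrac\eta2u_h^2\big)\varphi_2dx,$$ $$\varepsilon\Big(-\int_{I_j}u_h\partial_x\varphi_3dx+(\widehat{u_h}\varphi_3^-)_{j+\frac12}-(\widehat{u_h}\varphi_3^+)_{j-\frac12}\Big)=\int_{I_j}v_h\varphi_3dx,$$ $$\int_{I_j}\phi_h\partial_x\varphi_4dx-(\widehat{\phi_h}\varphi_4^-)_{j+\frac12}+(\widehat{\phi_h}\varphi_4^+)_{j-\frac12}=-\int_{I_j}u_h\varphi_4dx,$$ with interface fluxes $\widehat{w_h}=\{w_h\}+\alpha_1[w_h]$, $\widehat{v_h}=\{v_h\}-\alpha_2[v_h]$, $\widehat{u_h}=\{u_h\}+\alpha_2[u_h]$, $\widehat{\phi_h}=\{\phi_h\}-\alpha_1[\phi_h]$.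 Then the discrete energy $$\mathcal E_h=\int_\Omega\Big(\tfrac\eta6u_h^3-\tfrac12v_h^2\Big)dx$$ is constant in time.
   Context: This is a DG discretization of the KdV equation $u_t+\eta uu_x+\varepsilon^2u_{xxx}=0$ in the multi-symplectic form $\frac12u_t+w_x=0$, $-\frac12\phi_t-\varepsilon v_x=-w+\frac\eta2u^2$, $\varepsilon u_x=v$, $-\phi_x=-u$. Mesh and spaces: a one-dimensional domain $\Omega$ is partitioned into cells $I_j=[x_{j-1/2},x_{j+1/2}]$, $j=1,\dots,N$, with periodic boundary conditions (interface indices modulo $N$). For fixed $k\ge0$, $V_h=\{v\in L^2(\Omega): v|_{I_j}\text{ is a polynomial of degree}\le k\ \forall j\}$. For $v\in V_h$, $v^\pm_{j+1/2}$ are its right/left limits at $x_{j+1/2}$, $\{v\}=\frac12(v^++v^-)$, $[v]=v^+-v^-$; subscript $j\pm\frac12$ denotes evaluation at $x_{j\pm1/2}$. *)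

From HB Require Import structures.
From mathcomp Require Import all_boot all_order all_algebra.
From mathcomp Require Import all_classical all_reals all_analysis.
Set Implicit Arguments. Unset Strict Implicit. Unset Printing Implicit Defensive.
Import Order.TTheory GRing.Theory Num.Theory.
Import numFieldNormedType.Exports.
Local Open Scope classical_set_scope.
Local Open Scope ring_scope.

(* Mesh: nodes xn : nat -> R; cell I_j (j : 'I_N, 0-indexed) is
   [xn j, xn j.+1], i.e. x_{j-1/2} = xn j and x_{j+1/2} = xn j.+1.
   Periodicity: the cell following cell j is ordS j (cyclic successor),
   the preceding one is ord_pred j.

   An element of V_h is a family p : 'I_N -> {poly R} (p j is the
   restriction to I_j) with deg (p j) <= k. *)

Definition inVh (R : realType) (N k : nat) (p : 'I_N -> {poly R}) : Prop :=
  forall j : 'I_N, (size (p j) <= k.+1)%N.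

Definition cellint (R : realType) (xn : nat -> R) (j : nat) (f : R -> R) : R :=
  \int[lebesgue_measure]_(x in `[xn j, xn j.+1]) f x.

(* traces at the interface x_{j+1/2} (right end of cell j) *)
Definition trm (R : realType) (N : nat) (xn : nat -> R)
  (p : 'I_N -> {poly R}) (j : 'I_N) : R := (p j).[xn j.+1].
Definition trp (R : realType) (N : nat) (xn : nat -> R)
  (p : 'I_N -> {poly R}) (j : 'I_N) : R := (p (ordS j)).[xn (ordS j)].

Definition flux (R : realType) (N : nat) (xn : nat -> R) (a : R)
  (p : 'I_N -> {poly R}) (j : 'I_N) : R :=
  (trp xn p j + trm xn p j) / 2 + a * (trp xn p j - trm xn p j).

Definition dt (R : realType) (N : nat) (u : R -> 'I_N -> {poly R})
  (j : 'I_N) (t x : R) : R :=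
  derive1 (fun s => (u s j).[x]) t.

Definition C1Vh (R : realType) (N k : nat) (u : R -> 'I_N -> {poly R}) : Prop :=
  (forall t, inVh k (u t)) /\
  forall (j : 'I_N) (i : nat),
    (forall t, derivable (fun s => (u s j)`_i) t 1) /\
    continuous (fun t => derive1 (fun s => (u s j)`_i) t).

Definition energy (R : realType) (N : nat) (xn : nat -> R) (eta : R)
  (u v : R -> 'I_N -> {poly R}) (t : R) : R :=
  \sum_(j < N) cellint xn j
     (fun x => eta / 6 * (u t j).[x] ^+ 3 - 1 / 2 * (v t j).[x] ^+ 2).

(* Differentiating E_h gives sum_j int_{I_j} (eta/2 u_h^2 d_t u_h - v_h d_t v_h).
   Test the first equation with d_t phi_h and the second with d_t u_h; the third
   and fourth contain no time derivative, so differentiate them in time and test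
   with v_h and w_h.  Adding up, the rate becomes
     - sum_j (B_{a1}(w_h, d_t phi_h) + B_{-a1}(d_t phi_h, w_h))
     + eps sum_j (B_{-a2}(v_h, d_t u_h) + B_{a2}(d_t u_h, v_h)),
   where B_a(g, h) on I_j is int g h_x - (g^ h^-)_{j+1/2} + (g^ h^+)_{j-1/2}
   with g^ = {g} + a[g].  Each sum vanishes: int (g h' + h g') integrates to
   interface values, and with the fluxes {g} + a[g] and {h} - a[h] the two
   one-sided contributions at every interface agree, so the sum telescopes on
   the periodic mesh.
   Time derivatives are taken coefficientwise: under a uniform degree bound a
   linear functional of a V_h-valued curve is a fixed linear combination of its
   coefficients. *)

From HB Require Import structures.
From mathcomp Require Import all_boot all_order all_algebra.
From mathcomp Require Import all_classical all_reals all_analysis.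
From mathcomp.algebra_tactics Require Import ring lra.
Import Order.TTheory GRing.Theory Num.Theory.
Import numFieldNormedType.Exports.
Set Implicit Arguments. Unset Strict Implicit. Unset Printing Implicit Defensive.
Local Open Scope ring_scope.

Section PolyFamilyCurves.
Variables (R : realType) (N : nat).
Implicit Types (g h : R -> 'I_N -> {poly R}) (t : R).

Definition is_poly_derive g g' : Prop :=
  (exists M, forall s j, (size (g s j) <= M)%N) /\
  forall t j i, is_derive t (1 : R) (fun s => (g s j)`_i) (g' t j)`_i.

Lemma is_poly_derive_size g g' M : is_poly_derive g g' ->
  (forall s j, (size (g s j) <= M)%N) -> forall t j, (size (g' t j) <= M)%N.
Proof.
move=> [_ dg] gM t j; apply/leq_sizeP => i Mi.
rewrite -(derive_val (is_derive := dg t j i)) (_ : (fun s => _) = cst 0) ?derive_cst //.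
by apply/funext => s; rewrite nth_default // (leq_trans (gM s j)).
Qed.

Lemma is_poly_deriveD g g' h h' : is_poly_derive g g' -> is_poly_derive h h' ->
  is_poly_derive (fun s j => g s j + h s j) (fun t j => g' t j + h' t j).
Proof.
move=> [[Mg gM] dg] [[Mh hM] dh]; split.
  exists (maxn Mg Mh) => s j; apply: leq_trans (size_polyD _ _) _.
  by rewrite geq_max !leq_max gM hM orbT.
move=> t j i; rewrite coefD (funext (fun s => coefD (g s j) (h s j) i)).
exact: is_deriveD (dg t j i) (dh t j i).
Qed.

Lemma is_poly_deriveZ c g g' : is_poly_derive g g' ->
  is_poly_derive (fun s j => c *: g s j) (fun t j => c *: g' t j).
Proof.
move=> [[M gM] dg]; split; first by exists M => s j; rewrite (leq_trans (size_scale_leq _ _)).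
move=> t j i; rewrite coefZ (funext (fun s => coefZ c (g s j) i)).
exact: is_deriveZ (dg t j i).
Qed.

Lemma is_poly_deriveM g g' h h' : is_poly_derive g g' -> is_poly_derive h h' ->
  is_poly_derive (fun s j => g s j * h s j)
                 (fun t j => g' t j * h t j + g t j * h' t j).
Proof.
move=> [[Mg gM] dg] [[Mh hM] dh]; split.
  exists (Mg + Mh) => s j; apply: leq_trans (size_polyMleq _ _) _.
  by apply: leq_trans (leq_pred _) _; rewrite leq_add.
move=> t j i; rewrite (funext (fun s => coefM (g s j) (h s j) i)) -fct_sumE.
rewrite coefD !coefM -big_split; apply: is_derive_sum => l /=.
by apply: is_derive_eq; rewrite addrC [_ * (h t j)`__]mulrC.
Qed.

Definition basis_family (j' : 'I_N) (i : nat) : 'I_N -> {poly R} :=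
  fun j => (j' == j)%:R *: 'X^i.

Lemma basis_family_expansion (f : 'I_N -> {poly R}) M :
  (forall j, (size (f j) <= M)%N) ->
  f = \sum_(j' < N) \sum_(i < M) (f j')`_i *: basis_family j' i.
Proof.
move=> fM; apply/funext => j; rewrite fct_sumE /=.
under eq_bigr do rewrite fct_sumE /=.
rewrite (bigD1 j) //= [X in _ + X]big1 => [|j' /negPf nj]; last first.
  by apply: big1 => i _; rewrite scalrfctE /basis_family /= nj scale0r scaler0.
under eq_bigr do rewrite scalrfctE /basis_family /= eqxx scale1r.
rewrite addr0 -poly_def; apply/polyP => i; rewrite coef_poly.
by case: ltnP => // Mi; rewrite nth_default // (leq_trans (fM j)).
Qed.

Lemma is_derive_linear (L : ('I_N -> {poly R}) -> R) g g' t :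
  linear_for *%R L -> is_poly_derive g g' ->
  is_derive t (1 : R) (fun s => L (g s)) (L (g' t)).
Proof.
move=> linL dg; have [[M gM] dcoef] := dg.
pose L' : {linear _ -> R | *%R} := HB.pack L (GRing.isLinear.Build _ _ _ _ L linL).
have -> : L = L' by [].
have expand (f : 'I_N -> {poly R}) : (forall j, (size (f j) <= M)%N) ->
    L' f = \sum_(j' < N) \sum_(i < M) L' (basis_family j' i) * (f j')`_i.
  move=> fM; rewrite [in LHS](basis_family_expansion fM).
  rewrite linear_sum; apply: eq_bigr => j' _.
  rewrite linear_sum; apply: eq_bigr => i _.
  by rewrite linearZ_LR mulrC.
rewrite (expand _ (is_poly_derive_size dg gM t)).
rewrite (funext (fun s => expand _ (gM s))) -fct_sumE.
apply: is_derive_sum => j' /=; rewrite -fct_sumE.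
apply: is_derive_sum => i /=; exact: is_deriveZ (dcoef t j' i).
Qed.

Lemma linear_identity_derive (L1 L2 : ('I_N -> {poly R}) -> R) c g g' h h' t :
  linear_for *%R L1 -> linear_for *%R L2 ->
  is_poly_derive g g' -> is_poly_derive h h' ->
  (forall s, L1 (g s) = c * L2 (h s)) -> L1 (g' t) = c * L2 (h' t).
Proof.
move=> linL1 linL2 dg dh E.
have d1 := is_derive_linear t linL1 dg; rewrite (funext E) in d1.
have d2 : is_derive t 1 (fun s => c * L2 (h s)) (c * L2 (h' t)).
  exact: is_deriveZ (is_derive_linear t linL2 dh).
by rewrite -(derive_val (is_derive := d1)) (derive_val (is_derive := d2)).
Qed.

End PolyFamilyCurves.

Section CellIntegrals.
Variables (R : realType) (xn : nat -> R) (j : nat).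
Local Open Scope classical_set_scope.

Lemma horner_integrable (a b : R) (p : {poly R}) :
  lebesgue_measure.-integrable `[a, b] (EFin \o horner p).
Proof.
apply: continuous_compact_integrable; first exact: segment_compact.
exact/continuous_subspaceT/continuous_horner.
Qed.

Lemma cellint_hornerD p q :
  cellint xn j (horner (p + q)) = cellint xn j (horner p) + cellint xn j (horner q).
Proof.
rewrite /cellint -(RintegralD _ (horner_integrable _ _ p) (horner_integrable _ _ q)) //.
by apply: eq_Rintegral => x _; rewrite hornerD.
Qed.

Lemma cellint_hornerZ c p :
  cellint xn j (horner (c *: p)) = c * cellint xn j (horner p).
Proof.
rewrite /cellint -(RintegralZl c _ (horner_integrable _ _ p)) //.
by apply: eq_Rintegral => x _; rewrite hornerZ.
Qed.

Lemma cellint_hornerN p : cellint xn j (horner (- p)) = - cellint xn j (horner p).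
Proof. by rewrite -scaleN1r cellint_hornerZ mulN1r. Qed.

Lemma cellint_horner (p : {poly R}) F :
  (forall x, F x = p.[x]) -> cellint xn j F = cellint xn j (horner p).
Proof. by move=> /funext ->. Qed.

Lemma cellint_hornerM p q :
  cellint xn j (fun x => p.[x] * q.[x]) = cellint xn j (horner (p * q)).
Proof. by apply: cellint_horner => x; rewrite hornerM. Qed.

Lemma cellint_horner_deriv p : xn j < xn j.+1 ->
  cellint xn j (horner p^`()) = p.[xn j.+1] - p.[xn j].
Proof.
move=> ltj; rewrite /cellint /Rintegral.
rewrite (@continuous_FTC2 _ (horner p^`()) (horner p)) //.
- exact/continuous_subspaceT/continuous_horner.
- split; first by move=> x _; exact: derivable_horner.
  + exact/cvg_at_right_filter/continuous_horner.
  + exact/cvg_at_left_filter/continuous_horner.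
- by move=> x _; rewrite -derivE.
Qed.

Lemma cellint_horner_mulr_linear (N : nat) (i : 'I_N) q :
  linear_for *%R (fun f : 'I_N -> {poly R} => cellint xn j (horner (f i * q))).
Proof.
by move=> c f g; rewrite /= mulrDl -scalerAl cellint_hornerD cellint_hornerZ.
Qed.

End CellIntegrals.

Section DGForm.
Variables (R : realType) (N : nat) (xn : nat -> R).
Implicit Types (g h : 'I_N -> {poly R}) (a : R) (j : 'I_N).

Definition dg_form a g h j : R :=
  cellint xn j (horner (g j * (h j)^`()))
  - flux xn a g j * trm xn h j + flux xn a g (ord_pred j) * trp xn h (ord_pred j).

Lemma flux_linear a j : linear_for *%R (fun g => flux xn a g j).
Proof. by move=> c f g; rewrite /flux /trp /trm /= !hornerD !hornerZ; ring. Qed.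

Lemma dg_form_linear a h j : linear_for *%R (fun g => dg_form a g h j).
Proof.
move=> c f g; rewrite /dg_form !flux_linear.
rewrite (cellint_horner_mulr_linear xn j j (h j)^`() c f g); ring.
Qed.

Lemma trp_ord_pred g j : trp xn g (ord_pred j) = (g j).[xn j].
Proof. by rewrite /trp ord_predK. Qed.

Lemma dg_form_skew a g h : (forall j, xn j < xn j.+1) ->
  \sum_j (dg_form a g h j + dg_form (- a) h g j) = 0.
Proof.
move=> mesh.
pose G j := trm xn g j * trm xn h j
  - flux xn a g j * trm xn h j - flux xn (- a) h j * trm xn g j.
pose G' j := trp xn g j * trp xn h j
  - flux xn a g j * trp xn h j - flux xn (- a) h j * trp xn g j.
have cell j : dg_form a g h j + dg_form (- a) h g j = G j - G' (ord_pred j).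
  have ibp : cellint xn j (horner (g j * (h j)^`())) + cellint xn j (horner (h j * (g j)^`()))
      = trm xn g j * trm xn h j - (g j).[xn j] * (h j).[xn j].
    by rewrite -cellint_hornerD addrC mulrC -derivM cellint_horner_deriv // !hornerM.
  rewrite /dg_form /G /G' !trp_ord_pred; lra.
have GE j : G j = G' j by rewrite /G /G' /flux; field.
under eq_bigr do rewrite cell.
rewrite sumrB (reindex_inj (@ord_pred_inj N)) /=.
by rewrite -sumrB big1 // => j _; rewrite GE subrr.
Qed.

End DGForm.

Section TimeDerivative.
Variables (R : realType) (N k : nat).
Implicit Types (u : R -> 'I_N -> {poly R}) (t : R).

Definition tderiv u t : 'I_N -> {poly R} :=
  fun j => \poly_(i < k.+1) derive1 (fun s => (u s j)`_i) t.

Lemma tderiv_inVh u t : inVh k (tderiv u t).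
Proof. by move=> j; exact: size_poly. Qed.

Lemma C1Vh_is_poly_derive u : C1Vh k u -> is_poly_derive u (tderiv u).
Proof.
move=> [uk du]; split; first by exists k.+1.
move=> t j i; rewrite coef_poly; case: ltnP => ki.
  by rewrite derive1E; apply: derivableP; exact: (du j i).1.
rewrite (_ : (fun s => _) = cst 0); first exact: is_derive_cst.
by apply/funext => s; rewrite nth_default // (leq_trans (uk s j)).
Qed.

Lemma dt_tderiv u j t : C1Vh k u -> dt u j t = horner (tderiv u t j).
Proof.
move=> Cu; apply/funext => x; rewrite /dt derive1E; apply: derive_val.
apply: (is_derive_linear (L := fun f => (f j).[x])) (C1Vh_is_poly_derive Cu).
by move=> c f g; rewrite /= hornerD hornerZ.
Qed.

End TimeDerivative.

Lemma energy_is_derive (R : realType) (N k : nat) (xn : nat -> R) (eta : R)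
    (u v : R -> 'I_N -> {poly R}) (t : R) :
  C1Vh k u -> C1Vh k v ->
  is_derive t (1 : R) (energy xn eta u v)
    (\sum_(j < N) (eta / 2 * cellint xn j (horner (u t j * u t j * tderiv k u t j))
                   - cellint xn j (horner (tderiv k v t j * v t j)))).
Proof.
move=> /C1Vh_is_poly_derive du /C1Vh_is_poly_derive dv.
pose density s j := eta / 6 *: (u s j * (u s j * u s j)) + (- 2^-1) *: (v s j * v s j).
have ddensity := is_poly_deriveD
  (is_poly_deriveZ (eta / 6) (is_poly_deriveM du (is_poly_deriveM du du)))
  (is_poly_deriveZ (- 2^-1) (is_poly_deriveM dv dv)).
have -> : energy xn eta u v = fun s => \sum_(j < N) cellint xn j (horner (density s j)).
  apply/funext => s; apply: eq_bigr => j _; apply: cellint_horner => x.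
  by rewrite hornerD !hornerZ !hornerM; field.
have lin_int : linear_for *%R
    (fun f : 'I_N -> {poly R} => \sum_(j < N) cellint xn j (horner (f j))).
  move=> c f g; rewrite mulr_sumr -big_split; apply: eq_bigr => j _ /=.
  by rewrite cellint_hornerD cellint_hornerZ.
apply: is_derive_eq (is_derive_linear t lin_int ddensity) _.
apply: eq_bigr => j _ /=.
rewrite (@cellint_horner _ xn j (eta / 2 *: (u t j * u t j * tderiv k u t j)
                                 - tderiv k v t j * v t j)).
  by rewrite cellint_hornerD cellint_hornerN cellint_hornerZ.
by move=> x; rewrite !(hornerD, hornerN, hornerZ, hornerM); field.
Qed.

Theorem proposition4p2 (R : realType) (N k : nat) (xn : nat -> R)
  (hmesh : forall j : 'I_N, xn j < xn j.+1)
  (eta eps a1 a2 : R) (phi u v w : R -> 'I_N -> {poly R})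
  (Cphi : C1Vh k phi) (Cu : C1Vh k u) (Cv : C1Vh k v) (Cw : C1Vh k w)
  (eq1 : forall (t : R) (j : 'I_N) (f : 'I_N -> {poly R}), inVh k f ->
     1 / 2 * cellint xn j (fun x => dt u j t x * (f j).[x])
     - cellint xn j (fun x => (w t j).[x] * (f j)^`().[x])
     + flux xn a1 (w t) j * trm xn f j
     - flux xn a1 (w t) (ord_pred j) * trp xn f (ord_pred j) = 0)
  (eq2 : forall (t : R) (j : 'I_N) (f : 'I_N -> {poly R}), inVh k f ->
     - (1 / 2) * cellint xn j (fun x => dt phi j t x * (f j).[x])
     + eps * (cellint xn j (fun x => (v t j).[x] * (f j)^`().[x])
              - flux xn (- a2) (v t) j * trm xn f j
              + flux xn (- a2) (v t) (ord_pred j) * trp xn f (ord_pred j))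
     = cellint xn j (fun x => (- (w t j).[x] + eta / 2 * (u t j).[x] ^+ 2)
                               * (f j).[x]))
  (eq3 : forall (t : R) (j : 'I_N) (f : 'I_N -> {poly R}), inVh k f ->
     eps * (- cellint xn j (fun x => (u t j).[x] * (f j)^`().[x])
            + flux xn a2 (u t) j * trm xn f j
            - flux xn a2 (u t) (ord_pred j) * trp xn f (ord_pred j))
     = cellint xn j (fun x => (v t j).[x] * (f j).[x]))
  (eq4 : forall (t : R) (j : 'I_N) (f : 'I_N -> {poly R}), inVh k f ->
     cellint xn j (fun x => (phi t j).[x] * (f j)^`().[x])
     - flux xn (- a1) (phi t) j * trm xn f j
     + flux xn (- a1) (phi t) (ord_pred j) * trp xn f (ord_pred j)
     = - cellint xn j (fun x => (u t j).[x] * (f j).[x])) :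
  forall t1 t2 : R, energy xn eta u v t1 = energy xn eta u v t2.
Proof.
move=> t1 t2; apply: is_derive_0_is_cst => t.
apply: is_derive_eq (energy_is_derive xn eta t Cu Cv) _.
have dphi := C1Vh_is_poly_derive Cphi; have du := C1Vh_is_poly_derive Cu.
have dv := C1Vh_is_poly_derive Cv.
set u' := tderiv k u t; set v' := tderiv k v t; set phi' := tderiv k phi t.
have e1 (j : 'I_N) :
    dg_form xn a1 (w t) phi' j = 1 / 2 * cellint xn j (horner (u' j * phi' j)).
  move: (eq1 t j _ (tderiv_inVh k phi t)).
  by rewrite (dt_tderiv _ _ Cu) !cellint_hornerM /dg_form; lra.
have e2 (j : 'I_N) : - (1 / 2) * cellint xn j (horner (u' j * phi' j))
            + eps * dg_form xn (- a2) (v t) u' j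
    = eta / 2 * cellint xn j (horner (u t j * u t j * u' j))
      - cellint xn j (horner (u' j * w t j)).
  move: (eq2 t j _ (tderiv_inVh k u t)).
  rewrite (dt_tderiv _ _ Cphi) !cellint_hornerM [phi' j * _]mulrC.
  rewrite [X in _ = X -> _](@cellint_horner _ xn j
             (eta / 2 *: (u t j * u t j * u' j) - u' j * w t j)).
    by rewrite cellint_hornerD cellint_hornerN cellint_hornerZ /dg_form; lra.
  by move=> x; rewrite !(hornerD, hornerN, hornerZ, hornerM); ring.
have e3 (j : 'I_N) :
    cellint xn j (horner (v' j * v t j)) = - eps * dg_form xn a2 u' (v t) j.
  apply: (linear_identity_derive t (cellint_horner_mulr_linear xn j j (v t j))
    (dg_form_linear xn a2 (v t) j) dv du) => s.
  by move: (eq3 s j _ (Cv.1 t)); rewrite !cellint_hornerM /dg_form; lra.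
have e4 (j : 'I_N) :
    dg_form xn (- a1) phi' (w t) j = - 1 * cellint xn j (horner (u' j * w t j)).
  apply: (linear_identity_derive t (dg_form_linear xn (- a1) (w t) j)
    (cellint_horner_mulr_linear xn j j (w t j)) dphi du) => s.
  by move: (eq4 s j _ (Cw.1 t)); rewrite !cellint_hornerM /dg_form; lra.
rewrite (eq_bigr (fun j =>
    eps * (dg_form xn (- a2) (v t) u' j + dg_form xn (- - a2) u' (v t) j)
    - (dg_form xn a1 (w t) phi' j + dg_form xn (- a1) phi' (w t) j))) => [|j _].
  by rewrite sumrB -mulr_sumr !dg_form_skew // mulr0 subr0.
rewrite opprK e1 e3 e4.
rewrite -[eta / 2 * _](subrK (cellint xn j (horner (u' j * w t j)))) -e2; ring.
Qed.
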